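(* Let $E$ be a free $A_n(K)$-module with basis $e_1,\dots,e_m$, let $f\in E$, and let $G=\{g_1,\dots,g_r\}\subseteq E$ be an $(x,\partial)$-Gröbner basis in $E$ (i.e. an $(x,\partial)$-Gröbner basis of the submodule $\sum_{i=1}^r A_n(K)g_i$). Then there exist an element $g\in E$ and elements $Q_1,\dots,Q_r\in A_n(K)$ such that $f-g=\sum_{i=1}^r Q_ig_i$ and $g$ is $(x,\partial)$-reduced with respect to $G$.
   Context: $K$ is a field of characteristic zero and $A_n(K)$ is the Weyl algebra: the $K$-algebra generated by $x_1,\dots,x_n,\partial_1,\dots,\partial_n$ in which all pairs of generators commute except that $\partial_ix_i=x_i\partial_i+1$ ($i=1,\dots,n$). $\Theta$ denotes the set of monomials $x^\alpha\partial^\beta=x_1^{\alpha_1}\cdots x_n^{\alpha_n}\partial_1^{\beta_1}\cdots\partial_n^{\beta_n}$ ($\alpha,\beta\in\mathbf N^n$); it is a $K$-basis of $A_n(K)$. For $\theta=x^\alpha\partial^\beta$ put $ord_x\theta=|\alpha|=\sum\alpha_i$ and $ord_\partial\theta=|\beta|$. For $\theta=x^\alpha\partial^\beta$, $\theta'=x^\gamma\partial^\delta$ we say $\theta$ divides $\theta'$ ($\theta\mid\theta'$) if $\alpha_i\le\gamma_i,\beta_i\le\delta_i$ for all $i$, and then $\theta'/\theta:=x^{\gamma-\alpha}\partial^{\delta-\beta}\in\Theta$. The set $\Theta e=\{\theta e_i\}$ of terms is a $K$-basis of $E$; every nonzero $f\in E$ is uniquely a $K$-linear combination of distinct terms with nonzero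 coefficients, and these terms are said to appear in $f$. For a term $\theta e_i$, $ord_x(\theta e_i)=ord_x\theta$, $ord_\partial(\theta e_i)=ord_\partial\theta$. For $\theta=x^\alpha\partial^\beta\in\Theta$ and a term $w=x^\gamma\partial^\delta e_i$, the notation $\theta w$ denotes the term $x^{\alpha+\gamma}\partial^{\beta+\delta}e_i$ (exponent addition), whereas $\theta f$ for $f\in E$ denotes the module action. A term $w=\theta'e_i$ is a multiple of (is divisible by) $v=\theta e_j$, written $v\mid w$, if $i=j$ and $\theta\mid\theta'$; then $w/v:=\theta'/\theta$. Orders on $\Theta$: $x^\alpha\partial^\beta<_x x^\gamma\partial^\delta$ iff $(|\alpha|,|\beta|,\alpha_1,\dots,\alpha_n,\beta_1,\dots,\beta_n)$ is lexicographically smaller than $(|\gamma|,|\delta|,\gamma_1,\dots,\gamma_n,\delta_1,\dots,\delta_n)$; $x^\alpha\partial^\beta<_\partial x^\gamma\partial^\delta$ iff $(|\beta|,|\alpha|,\beta_1,\dots,\beta_n,\alpha_1,\dots,\alpha_n)$ is lexicographically smaller than $(|\delta|,|\gamma|,\delta_1,\dots,\delta_n,\gamma_1,\dots,\gamma_n)$. On terms, $\theta e_i<_x\theta'e_j$ iff $\theta<_x\theta'$, or $\theta=\theta'$ and $i<j$; similarly for $<_\partial$. For nonzero $f\in E$, the $x$-leader $u_f$ is the $<_x$-greatest term appearing in $f$ and the $\partial$-leader $v_f$ is the $<_\partial$-greatest term appearing in $f$; $lc_x(f)$ is the coefficient of $u_f$ in $f$. For $g\ne0$, an element $f\in E$ is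 $(x,\partial)$-reduced with respect to $g$ if $f$ contains no term of the form $\theta u_g$ ($\theta\in\Theta$) with $ord_\partial(\theta v_g)\le ord_\partial v_f$ (the zero element is reduced); $f$ is $(x,\partial)$-reduced with respect to a set $G$ if it is so with respect to every element of $G$. For nonzero $f$, let $d(f)=ord_\partial v_f-ord_\partial u_f$. A finite set $G=\{g_1,\dots,g_r\}$ of nonzero elements of a submodule $N\subseteq E$ is an $(x,\partial)$-Gröbner basis of $N$ if for every nonzero $f\in N$ there is $i$ with $u_{g_i}\mid u_f$ and $d(g_i)\le d(f)$. *)

From HB Require Import structures.
From mathcomp Require Import all_boot all_order all_algebra.
From mathcomp Require Import finmap.
From mathcomp.multinomials Require Import monalg.

Set Implicit Arguments.
Unset Strict Implicit.
Unset Printing Implicit Defensive.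

Import Order.TTheory GRing.Theory Num.Theory.
Local Open Scope ring_scope.

(* Monomials x^alpha d^beta of the Weyl algebra A_n(K): pairs (alpha, beta). *)
Definition Mon (n : nat) := (n.-tuple nat * n.-tuple nat)%type.
(* Terms theta e_i of the free module E with basis e_1..e_m (index i : 'I_m). *)
Definition Term (n m : nat) := (Mon n * 'I_m)%type.

(* A_n(K) as a K-vector space with basis Theta; E = A_n(K)^m with basis Theta e. *)
Definition Weyl (K : fieldType) (n : nat) := {malg K[Mon n]}.
Definition FreeMod (K : fieldType) (n m : nat) := {malg K[Term n m]}.

Section Weyl.
Variables (K : fieldType) (n m : nat).

Definition tsum (t : n.-tuple nat) : nat := (\sum_(i < n) tnth t i)%N.
Definition ordx (th : Mon n) : nat := tsum th.1.
Definition ordd (th : Mon n) : nat := tsum th.2.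

Definition mdiv (th th' : Mon n) : bool :=
  [forall i, tnth th.1 i <= tnth th'.1 i]%N && [forall i, tnth th.2 i <= tnth th'.2 i]%N.
Definition tdiv (v w : Term n m) : bool := (v.2 == w.2) && mdiv v.1 w.1.
Definition mquot (th th' : Mon n) : Mon n :=
  ([tuple (tnth th'.1 i - tnth th.1 i)%N | i < n],
   [tuple (tnth th'.2 i - tnth th.2 i)%N | i < n]).

Fixpoint lexle (s t : seq nat) : bool :=
  match s, t with
  | [::], _ => true
  | _ :: _, [::] => false
  | a :: s', b :: t' => (a < b)%N || ((a == b) && lexle s' t')
  end.

Definition keyx (th : Mon n) : seq nat :=
  [:: ordx th; ordd th] ++ (th.1 : seq nat) ++ (th.2 : seq nat).
Definition keyd (th : Mon n) : seq nat :=
  [:: ordd th; ordx th] ++ (th.2 : seq nat) ++ (th.1 : seq nat).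

Definition termle_x (w u : Term n m) : bool :=
  lexle (keyx w.1 ++ [:: nat_of_ord w.2]) (keyx u.1 ++ [:: nat_of_ord u.2]).
Definition termle_d (w u : Term n m) : bool :=
  lexle (keyd w.1 ++ [:: nat_of_ord w.2]) (keyd u.1 ++ [:: nat_of_ord u.2]).

Definition is_xleader (f : FreeMod K n m) (u : Term n m) : Prop :=
  u \in msupp f /\ forall w, w \in msupp f -> termle_x w u.
Definition is_dleader (f : FreeMod K n m) (v : Term n m) : Prop :=
  v \in msupp f /\ forall w, w \in msupp f -> termle_d w v.

Definition tincr (t : n.-tuple nat) (i : 'I_n) : n.-tuple nat :=
  [tuple (if j == i then (tnth t j).+1 else tnth t j) | j < n].
Definition tdecr (t : n.-tuple nat) (i : 'I_n) : n.-tuple nat :=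
  [tuple (if j == i then (tnth t j).-1 else tnth t j) | j < n].

Definition linext (F : Term n m -> FreeMod K n m) (f : FreeMod K n m) : FreeMod K n m :=
  \sum_(w <- msupp f) f@_w *: F w.

Definition xop (i : 'I_n) : FreeMod K n m -> FreeMod K n m :=
  linext (fun w => << ((tincr w.1.1 i, w.1.2), w.2) >>).
(* d_i * (x^g d^d e_j) = x^g d^(d+eps_i) e_j + g_i x^(g-eps_i) d^d e_j *)
Definition dop (i : 'I_n) : FreeMod K n m -> FreeMod K n m :=
  linext (fun w => << ((w.1.1, tincr w.1.2 i), w.2) >>
                   + (tnth w.1.1 i)%:R *: << ((tdecr w.1.1 i, w.1.2), w.2) >>).

(* action of a monomial x^alpha d^beta: first d^beta, then x^alpha *)
Definition act_mon (th : Mon n) (f : FreeMod K n m) : FreeMod K n m :=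
  foldr (fun i g => iter (tnth th.1 i) (xop i) g)
        (foldr (fun i g => iter (tnth th.2 i) (dop i) g) f (enum 'I_n))
        (enum 'I_n).

Definition act (Q : Weyl K n) (f : FreeMod K n m) : FreeMod K n m :=
  \sum_(th <- msupp Q) Q@_th *: act_mon th f.

Definition in_submod (r : nat) (g : 'I_r -> FreeMod K n m) (f : FreeMod K n m) : Prop :=
  exists Q : 'I_r -> Weyl K n, f = \sum_(i < r) act (Q i) (g i).

Definition dval (u v : Term n m) : nat := (ordd v.1 - ordd u.1)%N.

Definition is_xd_groebner (r : nat) (g : 'I_r -> FreeMod K n m) : Prop :=
  (forall i, g i != 0) /\
  forall f, f != 0 -> in_submod g f ->
  forall uf vf, is_xleader f uf -> is_dleader f vf ->
  exists i : 'I_r, exists ug vg,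
    [/\ is_xleader (g i) ug, is_dleader (g i) vg, tdiv ug uf
      & (dval ug vg <= dval uf vf)%N].

(* f is (x,d)-reduced w.r.t. g: f contains no term theta u_g with
   ord_d (theta v_g) <= ord_d v_f (vacuous for f = 0) *)
Definition xd_reduced (g f : FreeMod K n m) : Prop :=
  forall ug vg vf, is_xleader g ug -> is_dleader g vg -> is_dleader f vf ->
  forall w, w \in msupp f ->
    ~~ (tdiv ug w && (ordd (mquot ug.1 w.1) + ordd vg.1 <= ordd vf.1)%N).

Definition xd_reduced_set (r : nat) (g : 'I_r -> FreeMod K n m) (f : FreeMod K n m) : Prop :=
  forall i, xd_reduced (g i) f.

End Weyl.

From HB Require Import structures.
From mathcomp Require Import all_boot all_order all_algebra.
From mathcomp Require Import finmap.
From mathcomp.multinomials Require Import monalg.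
From Stdlib Require Import Classical.

Set Implicit Arguments.
Unset Strict Implicit.
Unset Printing Implicit Defensive.

Import Order.TTheory GRing.Theory Num.Theory.

(* Call a term w of h reducible if u_{g_i} | w and ord_d(w/u_{g_i}) + ord_d v_{g_i} <= ord_d v_h
   for some i.  Let t be the x-greatest reducible term of h and theta = t/u_{g_i}.  The element
   theta g_i has x-leader theta u_{g_i} = t, and its other terms are x-smaller than t with
   d-order at most ord_d theta + ord_d v_{g_i} <= ord_d v_h.  Subtracting the multiple of
   theta g_i that cancels t thus does not raise ord_d v_h, so every reducible term of the new
   remainder is x-smaller than t.  Since <_x is well founded, iterating this step ends with a
   reduced remainder. *)

Lemma lexle_refl s : lexle s s.
Proof. by elim: s => //= a s ->; rewrite eqxx orbT. Qed.

Lemma lexle_total s t : lexle s t || lexle t s.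
Proof.
elim: s t => [|a s IH] [|b t] //=.
by case: (ltngtP a b) => //= ->; rewrite ?eqxx.
Qed.

Lemma lexle_trans t s u : lexle s t -> lexle t u -> lexle s u.
Proof.
elim: s t u => [|a s IH] [|b t] [|c u] //=.
case/orP => [ab|/andP[/eqP <- st]]; case/orP => [bc|/andP[/eqP <- tu]].
- by rewrite (ltn_trans ab bc).
- by rewrite ab.
- by rewrite bc.
- by rewrite eqxx (IH _ _ st tu) orbT.
Qed.

Definition addseq (a s : seq nat) : seq nat := [seq x.1 + x.2 | x <- zip a s].

Lemma lexle_addseq2l a s t : size s = size a -> size t = size a ->
  lexle (addseq a s) (addseq a t) = lexle s t.
Proof.
elim: a s t => [|x a IH] [|y s] [|z t] //= [hs] [ht].
by rewrite ltn_add2l eqn_add2l IH.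
Qed.

Lemma addseq_cat a1 a2 s1 s2 : size s1 = size a1 ->
  addseq (a1 ++ a2) (s1 ++ s2) = addseq a1 s1 ++ addseq a2 s2.
Proof. by move=> h; rewrite /addseq zip_cat // map_cat. Qed.

Definition lexlt_size k (a b : seq nat) :=
  [/\ size a = k, size b = k, lexle a b & a != b].

Lemma lexlt_size_wf k : well_founded (lexlt_size k).
Proof.
elim: k => [|k IHk] s.
  by constructor=> a [/size0nil -> /size0nil -> _ /eqP].
case: s => [|x s]; first by constructor=> a [_ /eqP].
elim/ltn_ind: x s => x IHx s.
elim: (IHk s) => {}s _ IHs.
constructor=> -[|y a] [ha hb]; first by [].
move: ha hb => /= [ha] [hb] /orP[yx | /andP[/eqP eyx le_as]] neq.
  exact: IHx.
subst y; apply: IHs; split=> //.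
by apply: contra neq => /eqP ->.
Qed.

Lemma exists_max_seq (T : eqType) (le : rel T) (P : T -> Prop) (s : seq T) :
  reflexive le -> transitive le -> total le -> (exists2 x, x \in s & P x) ->
  exists x, [/\ x \in s, P x & forall y, y \in s -> P y -> le y x].
Proof.
move=> le_refl le_trans le_total; elim: s => [|a s IH] ex; first by case: ex.
have [[y ys Py] | nos] := classic (exists2 y, y \in s & P y); last first.
  have Pa : P a.
    by case: ex => x; rewrite inE => /orP[/eqP-> // | xs Px]; case: nos; exists x.
  exists a; split; rewrite ?mem_head // => z; rewrite inE.
  by case/orP=> [/eqP-> // | zs Pz]; case: nos; exists z.
have [z [zs Pz zmax]] := IH (ex_intro2 _ _ y ys Py).
have [[Pa le_za] | not_a] := classic (P a /\ le z a).
  exists a; split; rewrite ?mem_head // => x; rewrite inE.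
  by case/orP=> [/eqP-> // | xs Px]; apply: le_trans (zmax x xs Px) le_za.
exists z; split; rewrite ?inE ?zs ?orbT // => x; rewrite inE.
case/orP=> [/eqP-> Pa | xs Px]; last exact: zmax.
by have /orP[// | le_za] := le_total a z; case: not_a.
Qed.

Lemma foldr_iter_rel (I A B : Type) (rel : A -> B -> Prop) (k : I -> nat)
    (opA : I -> A -> A) (opB : I -> B -> B) (s : seq I) a b :
  (forall i x y, rel x y -> rel (opA i x) (opB i y)) -> rel a b ->
  rel (foldr (fun i x => iter (k i) (opA i) x) a s)
      (foldr (fun i y => iter (k i) (opB i) y) b s).
Proof.
move=> hop hab; elim: s => [|i s IH] //=.
by elim: (k i) => [|j IHj] //=; apply: hop.
Qed.

Section TermArithmetic.
Variables (n m : nat).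
Local Notation T := (Term n m).
Implicit Types (t : n.-tuple nat) (th : Mon n) (a b u w : T).

Definition tadd (a b : n.-tuple nat) : n.-tuple nat :=
  [tuple tnth a j + tnth b j | j < n].
Definition mulx_term w (i : 'I_n) : T := ((tincr w.1.1 i, w.1.2), w.2).
Definition muld_term w (i : 'I_n) : T := ((w.1.1, tincr w.1.2 i), w.2).
Definition mul_term th w : T := ((tadd th.1 w.1.1, tadd th.2 w.1.2), w.2).
Definition xkey w : seq nat := keyx w.1 ++ [:: nat_of_ord w.2].
Definition termlt (a b : T) := termle_x a b && (a != b).

Lemma tsum_incr t i : tsum (tincr t i) = (tsum t).+1.
Proof.
rewrite /tsum (bigD1 i) //= [in RHS](bigD1 i) //= tnth_mktuple eqxx addSn.
by congr (_.+1 + _); apply: eq_bigr => j /negbTE ji; rewrite tnth_mktuple ji.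
Qed.

Lemma tsum_decr_le t i : tsum (tdecr t i) <= tsum t.
Proof.
rewrite /tsum; apply: leq_sum => j _; rewrite tnth_mktuple.
by case: (j == i) => //; apply: leq_pred.
Qed.

Lemma tsum_decr_lt t i : 0 < tnth t i -> tsum (tdecr t i) < tsum t.
Proof.
move=> ti; rewrite /tsum (bigD1 i) //= [in X in _ < X](bigD1 i) //= tnth_mktuple eqxx.
rewrite -addSn prednK // leq_add2l; apply: leq_sum => j /negbTE ji.
by rewrite tnth_mktuple ji.
Qed.

Lemma tsum_add (a b : n.-tuple nat) : tsum (tadd a b) = tsum a + tsum b.
Proof. by rewrite /tsum -big_split; apply: eq_bigr => j _; rewrite tnth_mktuple. Qed.

Lemma val_tadd (a b : n.-tuple nat) : tadd a b = addseq a b :> seq nat.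
Proof.
apply: (@eq_from_nth _ 0).
  by rewrite size_tuple size_map size_zip !size_tuple minnn.
move=> i; rewrite size_tuple => hi.
have -> : nth 0 (tadd a b) i = tnth (tadd a b) (Ordinal hi) by rewrite (tnth_nth 0).
rewrite tnth_mktuple (nth_map (0, 0)); last by rewrite size_zip !size_tuple minnn.
by rewrite nth_zip ?size_tuple //= !(tnth_nth 0).
Qed.

Lemma foldr_iter_tincr (k : 'I_n -> nat) t :
  foldr (fun i t => iter (k i) (fun t => tincr t i) t) t (enum 'I_n) =
  [tuple k j + tnth t j | j < n].
Proof.
apply: eq_from_tnth => j; rewrite tnth_mktuple.
have tnth_foldr s : tnth (foldr (fun i t => iter (k i) (fun t => tincr t i) t) t s) j =
    tnth t j + \sum_(i <- s | i == j) k i.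
  elim: s => [|i s IH] /=; first by rewrite big_nil addn0.
  rewrite big_cons; elim: (k i) => [|l IHl] /=; first by case: (i == j); rewrite ?IH.
  by rewrite tnth_mktuple IHl (eq_sym j); case: (i == j); rewrite ?addnS.
by rewrite tnth_foldr big_enum_cond /= big_pred1_eq addnC.
Qed.

Lemma ordx_mulx_term w i : ordx (mulx_term w i).1 = (ordx w.1).+1.
Proof. exact: tsum_incr. Qed.

Lemma ordd_muld_term w i : ordd (muld_term w i).1 = (ordd w.1).+1.
Proof. exact: tsum_incr. Qed.

Lemma ordx_mul_term th w : ordx (mul_term th w).1 = ordx th + ordx w.1.
Proof. exact: tsum_add. Qed.

Lemma ordd_mul_term th w : ordd (mul_term th w).1 = ordd th + ordd w.1.
Proof. exact: tsum_add. Qed.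

Lemma size_xkey w : size (xkey w) = (n + n).+3.
Proof. by rewrite /xkey /keyx !size_cat !size_tuple addn1. Qed.

Lemma xkey_mul_term th w : xkey (mul_term th w) = addseq (keyx th ++ [:: 0]) (xkey w).
Proof.
rewrite /xkey /keyx ordx_mul_term ordd_mul_term /= !val_tadd -!catA.
by rewrite [addseq (_ :: _) _]/addseq /= -/(addseq _ _) !addseq_cat ?size_tuple.
Qed.

Lemma xkey_inj : injective xkey.
Proof.
move=> [[a1 a2] ai] [[b1 b2] bi]; rewrite /xkey /keyx /= => -[_ _] /eqP.
rewrite -!catA eqseq_cat ?size_tuple // => /andP[/eqP e1].
rewrite eqseq_cat ?size_tuple // => /andP[/eqP e2 /eqP[/ord_inj ei]].
by rewrite (val_inj e1) (val_inj e2) ei.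
Qed.

Lemma mul_term_inj th : injective (mul_term th).
Proof.
have tadd_inj (a : n.-tuple nat) : injective (tadd a).
  move=> b c e; apply: eq_from_tnth => j.
  by have := congr1 (fun t => tnth t j) e; rewrite !tnth_mktuple => /addnI.
move=> [[a1 a2] ai] [[b1 b2] bi] e.
have /tadd_inj -> : tadd th.1 a1 = tadd th.1 b1 := congr1 (fun v : T => v.1.1) e.
have /tadd_inj -> : tadd th.2 a2 = tadd th.2 b2 := congr1 (fun v : T => v.1.2) e.
by have /= -> : ai = bi := congr1 snd e.
Qed.

Lemma termle_x_refl : reflexive (@termle_x n m).
Proof. by move=> a; apply: lexle_refl. Qed.

Lemma termle_x_trans : transitive (@termle_x n m).
Proof. by move=> b a c; apply: lexle_trans. Qed.

Lemma termle_x_total : total (@termle_x n m).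
Proof. by move=> a b; apply: lexle_total. Qed.

Lemma termle_x_mul_term th a b :
  termle_x a b -> termle_x (mul_term th a) (mul_term th b).
Proof.
rewrite /termle_x -!/(xkey _) !xkey_mul_term lexle_addseq2l //.
- by rewrite size_xkey /keyx !size_cat !size_tuple /= addn1.
- by rewrite size_xkey /keyx !size_cat !size_tuple /= addn1.
Qed.

Lemma termle_x_ordx a b : termle_x a b -> ordx a.1 <= ordx b.1.
Proof. by case/orP=> [/ltnW|/andP[/eqP -> _]]. Qed.

Lemma termle_d_ordd a b : termle_d a b -> ordd a.1 <= ordd b.1.
Proof. by case/orP=> [/ltnW|/andP[/eqP -> _]]. Qed.

Lemma ordx_lt_termlt a b : ordx a.1 < ordx b.1 -> termlt a b.
Proof.
move=> lt_ab; rewrite /termlt /termle_x /= lt_ab.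
by apply: contraTneq lt_ab => ->; rewrite ltnn.
Qed.

Lemma termlt_wf : well_founded termlt.
Proof.
suff acc_xkey s : Acc (lexlt_size (n + n).+3) s -> forall a, xkey a = s -> Acc termlt a.
  by move=> a; apply: acc_xkey (lexlt_size_wf _ _) a erefl.
elim=> {}s _ IH a ea; constructor=> b /andP[le_ba ne_ba]; apply: (IH (xkey b)) => //.
rewrite -ea; split; rewrite ?size_xkey //.
by apply: contra ne_ba => /eqP/xkey_inj ->.
Qed.

Lemma mul_term_mquot u w : tdiv u w -> mul_term (mquot u.1 w.1) u = w.
Proof.
case: u => [[u1 u2] ui]; case: w => [[w1 w2] wi].
rewrite /tdiv /mdiv /= => /andP[/eqP -> /andP[/forallP le1 /forallP le2]].
by congr (_, _, _); apply: eq_from_tnth => j; rewrite !tnth_mktuple subnK.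
Qed.

Lemma mul_term_foldr th w :
  foldr (fun i v => iter (tnth th.1 i) (fun v => mulx_term v i) v)
    (foldr (fun i v => iter (tnth th.2 i) (fun v => muld_term v i) v) w (enum 'I_n))
    (enum 'I_n)
  = mul_term th w.
Proof.
rewrite /mul_term -[tadd th.1 _]foldr_iter_tincr -[tadd th.2 _]foldr_iter_tincr.
apply: (@foldr_iter_rel _ _ _ (fun t v => v = ((t, _), w.2))) => [i x y -> //|].
apply: (@foldr_iter_rel _ _ _ (fun t v => v = ((w.1.1, t), w.2))) => [i x y -> //|].
by case: w => [[]].
Qed.

End TermArithmetic.

Local Open Scope ring_scope.

Section LinearIterates.
Variables (R : pzRingType) (V : lmodType R).
Implicit Types phi psi : V -> V.

Lemma linear_comp phi psi : linear phi -> linear psi -> linear (phi \o psi).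
Proof. by move=> lphi lpsi a u v /=; rewrite lpsi lphi. Qed.

Lemma linear_iter k phi : linear phi -> linear (iter k phi).
Proof. by move=> lphi; elim: k => [|k IH] // a u v /=; rewrite IH lphi. Qed.

Lemma linear_foldr (I : Type) (s : seq I) (P : I -> V -> V) :
  (forall i, linear (P i)) -> linear (fun x => foldr P x s).
Proof. by move=> lP; elim: s => [|i s IH] // a u v /=; rewrite IH lP. Qed.

Lemma linear_add phi : linear phi -> {morph phi : x y / x + y}.
Proof. by move=> lphi x y; rewrite -[x in LHS]scale1r lphi scale1r. Qed.

End LinearIterates.

Section MalgSupport.
Variables (R : nzRingType) (T : choiceType).
Local Notation M := {malg R[T]}.
Implicit Types (f h : M) (P : T -> Prop).

Lemma mcoeff_basis (w k : T) : (<<w>> : M)@_k = (w == k)%:R.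
Proof. by rewrite mcoeffU. Qed.

Lemma msupp_basis (w : T) : msupp (<<w>> : M) = [fset w]%fset.
Proof. by rewrite msuppU oner_eq0. Qed.

Lemma monalgUZ (c : R) (w : T) : << c *g w >> = c *: (<<w>> : M).
Proof. by apply/malgP => k; rewrite mcoeffZ !mcoeffU mulr_natr. Qed.

Lemma linear_monalgE (phi : M -> M) f : linear phi ->
  phi f = \sum_(w <- msupp f) f@_w *: phi <<w>>.
Proof.
move=> lphi; have [phiZ phiD] := GRing.semilinear_linear lphi.
have phi0 : phi 0 = 0 by rewrite -[X in phi X](scale0r (0 : M)) phiZ /= scale0r.
rewrite {1}(monalgE f) (big_morph phi phiD phi0); apply: eq_bigr => w _.
by rewrite monalgUZ phiZ.
Qed.

Definition supp_all P f := forall t, t \in msupp f -> P t.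

Lemma supp_all0 P : supp_all P 0.
Proof. by move=> t; rewrite msupp0. Qed.

Lemma supp_allD P f h : supp_all P f -> supp_all P h -> supp_all P (f + h).
Proof.
by move=> hf hh t /(fsubsetP (msuppD_le f h)); rewrite in_fsetU => /orP[/hf|/hh].
Qed.

Lemma supp_allZ P c f : supp_all P f -> supp_all P (c *: f).
Proof. by move=> hf t /(fsubsetP (msuppZ_le c f)) /hf. Qed.

Lemma supp_allU P w : P w -> supp_all P <<w>>.
Proof. by move=> hw t; rewrite msupp_basis in_fset1 => /eqP ->. Qed.

Lemma supp_allW P Q f : (forall t, P t -> Q t) -> supp_all P f -> supp_all Q f.
Proof. by move=> PQ hf t /hf /PQ. Qed.

Lemma supp_all_sum P (I : eqType) (s : seq I) (p : pred I) (F : I -> M) :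
  (forall i, i \in s -> p i -> supp_all P (F i)) ->
  supp_all P (\sum_(i <- s | p i) F i).
Proof.
move=> hF; rewrite big_seq_cond; apply: big_ind => //.
- exact: supp_all0.
- exact: supp_allD.
- by move=> i /andP[]; apply: hF.
Qed.

End MalgSupport.

Lemma msupp_cancel (K : fieldType) (T : choiceType) (h R : {malg K[T]}) (t : T)
    (a : K) :
  a != 0 -> R@_t = 0 -> forall w, w \in msupp (h - (h@_t / a) *: (a *: <<t>> + R)) ->
  w \in msupp R \/ (w != t /\ w \in msupp h).
Proof.
move=> a0 Rt w; rewrite -!mcoeff_neq0 mcoeffB mcoeffZ mcoeffD mcoeffZ mcoeff_basis.
have [->|ne_wt] := eqVneq w t; first by rewrite Rt mulr1 addr0 divfK // subrr eqxx.
rewrite mulr0 add0r; have [->|] := eqVneq R@_w 0; last by left.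
by rewrite mulr0 subr0; right.
Qed.

Section WeylAction.
Variables (K : fieldType) (n m : nat).
Local Notation T := (Term n m).
Local Notation FM := (FreeMod K n m).
Local Notation WA := (Weyl K n).

Lemma linextEw (F : T -> FM) (f : FM) (d : {fset T}) : (msupp f `<=` d)%fset ->
  linext F f = \sum_(w <- d) f@_w *: F w.
Proof.
move=> le_fd; rewrite /linext (big_fset_incl _ le_fd) //= => w _ /mcoeff_outdom ->.
by rewrite scale0r.
Qed.

Lemma linext_linear (F : T -> FM) : linear (linext F).
Proof.
move=> a u v; set d := (msupp u `|` msupp v)%fset.
have le_d : (msupp (a *: u + v) `<=` d)%fset.
  apply: fsubset_trans (msuppD_le _ _) _; apply: fsetSU; exact: msuppZ_le.
rewrite (linextEw F le_d) (linextEw F (fsubsetUl (msupp u) (msupp v))).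
rewrite (linextEw F (fsubsetUr (msupp u) (msupp v))) scaler_sumr -big_split.
apply: eq_bigr => w _.
by rewrite mcoeffD mcoeffZ scalerDl scalerA.
Qed.

Lemma linextU (F : T -> FM) (w : T) : linext F <<w>> = F w.
Proof. by rewrite /linext msupp_basis big_seq_fset1 mcoeff_basis eqxx scale1r. Qed.

Lemma act_mon_linear (th : Mon n) : linear (@act_mon K n m th).
Proof.
have linear_foldr_iter (op : 'I_n -> FM -> FM) (k : 'I_n -> nat) :
    (forall i, linear (op i)) ->
    linear (fun f => foldr (fun i g => iter (k i) (op i) g) f (enum 'I_n)).
  by move=> lop; apply: linear_foldr => i; apply: linear_iter.
exact: linear_comp (linear_foldr_iter _ _ (fun i => linext_linear _))
                   (linear_foldr_iter _ _ (fun i => linext_linear _)).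
Qed.

Lemma actEw (Q : WA) (f : FM) (d : {fset Mon n}) : (msupp Q `<=` d)%fset ->
  act Q f = \sum_(th <- d) Q@_th *: act_mon th f.
Proof.
move=> le_Qd; rewrite /act (big_fset_incl _ le_Qd) //= => th _ /mcoeff_outdom ->.
by rewrite scale0r.
Qed.

Lemma act0 (f : FM) : act 0 f = 0.
Proof. by rewrite /act msupp0 big_seq_fset0. Qed.

Lemma actDl (Q1 Q2 : WA) (f : FM) : act (Q1 + Q2) f = act Q1 f + act Q2 f.
Proof.
set d := (msupp Q1 `|` msupp Q2)%fset.
rewrite (actEw f (msuppD_le Q1 Q2)) (actEw f (fsubsetUl _ _ : _ `<=` d)%fset).
rewrite (actEw f (fsubsetUr _ _ : _ `<=` d)%fset) -big_split /=.
by apply: eq_bigr => th _; rewrite mcoeffD scalerDl.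
Qed.

Lemma act_scaleU (c : K) (th : Mon n) (f : FM) :
  act (c *: <<th>>) f = c *: act_mon th f.
Proof.
have le_th : (msupp (c *: <<th>> : WA) `<=` [fset th])%fset.
  exact: fsubset_trans (msuppZ_le _ _) msuppU_le.
by rewrite (actEw f le_th) big_seq_fset1 mcoeffZ mcoeff_basis eqxx mulr1.
Qed.

End WeylAction.

Section LeadingTerm.
Variables (K : fieldType) (n m : nat).
Local Notation T := (Term n m).
Local Notation FM := (FreeMod K n m).

Definition term_below (X D : nat) (t : T) := (ordx t.1 < X)%N /\ (ordd t.1 <= D)%N.

Definition xhead (F : FM) (w : T) :=
  exists R, F = <<w>> + R /\ supp_all (term_below (ordx w.1) (ordd w.1)) R.

Lemma xop_below i X D (R : FM) :
  supp_all (term_below X D) R -> supp_all (term_below X.+1 D) (xop i R).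
Proof.
move=> lowR; apply: supp_all_sum => w /lowR[ltX leD] _; apply: supp_allZ.
by apply: supp_allU; rewrite /term_below /ordx /= tsum_incr.
Qed.

Lemma dop_below i X D (R : FM) :
  supp_all (term_below X D) R -> supp_all (term_below X D.+1) (dop i R).
Proof.
move=> lowR; apply: supp_all_sum => w /lowR[ltX leD] _; apply: supp_allZ.
apply: supp_allD; [apply: supp_allU | apply: supp_allZ; apply: supp_allU].
  by split; rewrite /ordd ?tsum_incr.
by split; [exact: leq_ltn_trans (tsum_decr_le _ _) ltX | exact: leqW].
Qed.

Lemma xop_xhead i (F : FM) w : xhead F w -> xhead (xop i F) (mulx_term w i).
Proof.
move=> [R [-> lowR]]; exists (xop i R); split.
  by rewrite /xop (linear_add (linext_linear _)) linextU /mulx_term.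
by rewrite ordx_mulx_term; apply: xop_below.
Qed.

Lemma dop_xhead i (F : FM) w : xhead F w -> xhead (dop i F) (muld_term w i).
Proof.
move=> [R [-> lowR]].
exists ((tnth w.1.1 i)%:R *: <<((tdecr w.1.1 i, w.1.2), w.2)>> + dop i R); split.
  by rewrite {1}/dop (linear_add (linext_linear _)) linextU [RHS]addrA /muld_term.
rewrite ordd_muld_term; apply: supp_allD; last exact: dop_below.
have [->|ti] := posnP (tnth w.1.1 i); first by rewrite scale0r; apply: supp_all0.
by apply: supp_allZ; apply: supp_allU; split; [exact: tsum_decr_lt | exact: leqnSn].
Qed.

(* Each commutation d_i x_i = x_i d_i + 1 trades a factor x_i for nothing, so everything
   but the exponent sum theta w has smaller x-order. *)
Lemma act_mon_xhead (th : Mon n) w : xhead (act_mon th <<w>>) (mul_term th w).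
Proof.
rewrite -mul_term_foldr.
apply: (foldr_iter_rel (rel := xhead)) => [i F v|]; first exact: xop_xhead.
apply: (foldr_iter_rel (rel := xhead)) => [i F v|]; first exact: dop_xhead.
by exists 0; split; [rewrite addr0 | apply: supp_all0].
Qed.

End LeadingTerm.

Section XLeader.
Variables (K : fieldType) (n m : nat).
Local Notation T := (Term n m).
Local Notation FM := (FreeMod K n m).

Definition xbelow (u : T) (D : nat) (t : T) := termlt t u /\ (ordd t.1 <= D)%N.

Lemma act_mon_xleader (th : Mon n) (g : FM) ug vg :
  is_xleader g ug -> is_dleader g vg ->
  exists R, act_mon th g = g@_ug *: <<mul_term th ug>> + R /\
            supp_all (xbelow (mul_term th ug) (ordd th + ordd vg.1)) R.
Proof.
move=> [ug_g ug_max] [_ vg_max].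
have le_vg w : w \in msupp g -> (ordd w.1 <= ordd vg.1)%N by move/vg_max/termle_d_ordd.
have xbelow_of w : w \in msupp g -> forall t,
    term_below (ordx (mul_term th w).1) (ordd (mul_term th w).1) t ->
    xbelow (mul_term th ug) (ordd th + ordd vg.1) t.
  move=> w_g t [lt_x le_d]; split.
    apply: ordx_lt_termlt; apply: leq_trans lt_x _.
    by rewrite !ordx_mul_term leq_add2l; apply/termle_x_ordx/ug_max.
  by apply: leq_trans le_d _; rewrite ordd_mul_term leq_add2l le_vg.
have -> : act_mon th g = \sum_(w <- msupp g) g@_w *: act_mon th (<<w>> : FM).
  exact: linear_monalgE (act_mon_linear th).
rewrite (bigD1_seq ug) ?fset_uniq //=.
have [R [act_ug below_R]] := act_mon_xhead K th ug.
have -> : g@_ug *: act_mon th (<<ug>> : FM) = g@_ug *: <<mul_term th ug>> + g@_ug *: R.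
  by rewrite act_ug scalerDr.
rewrite -addrA; eexists; split; first reflexivity.
apply: supp_allD; first by apply: supp_allZ; apply: supp_allW (xbelow_of _ ug_g) below_R.
apply: supp_all_sum => w w_g ne_wu; apply: supp_allZ.
have [Rw [-> below_Rw]] := act_mon_xhead K th w.
apply: supp_allD; last exact: supp_allW (xbelow_of _ w_g) below_Rw.
apply: supp_allU; split; last by rewrite ordd_mul_term leq_add2l le_vg.
rewrite /termlt termle_x_mul_term ?ug_max //=.
by apply: contra ne_wu => /eqP/mul_term_inj ->.
Qed.

End XLeader.

Section Reduction.
Variables (K : fieldType) (n m r : nat).
Variables (g : 'I_r -> FreeMod K n m) (f : FreeMod K n m).
Local Notation T := (Term n m).
Local Notation FM := (FreeMod K n m).

Definition reducible (h : FM) (w : T) :=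
  w \in msupp h /\ exists i ug vg vh,
    [/\ is_xleader (g i) ug, is_dleader (g i) vg, is_dleader h vh, tdiv ug w
      & (ordd (mquot ug.1 w.1) + ordd vg.1 <= ordd vh.1)%N].

Definition remainder (h : FM) :=
  exists Q : 'I_r -> Weyl K n, f - h = \sum_(i < r) act (Q i) (g i).

Lemma remainder_self : remainder f.
Proof. by exists (fun=> 0); rewrite subrr big1 // => i _; rewrite act0. Qed.

Lemma remainder_sub h i c th : remainder h -> remainder (h - c *: act_mon th (g i)).
Proof.
move=> [Q EQ]; exists (fun j => if j == i then Q j + c *: <<th>> else Q j).
rewrite (bigD1 i) // eqxx actDl act_scaleU.
rewrite (eq_bigr (fun j => act (Q j) (g j))) => [|j /negbTE -> //].
move: EQ; rewrite (bigD1 i) //.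
(* Generalized so that the ring rewrites below cannot try to unfold [act]. *)
move: (act (Q i) (g i)) (act_mon th (g i)) (\sum_(j < r | j != i) act (Q j) (g j)).
by move=> a b s EQ; rewrite opprB addrA addrAC EQ addrAC.
Qed.

Lemma reduced_of_irreducible h : (forall w, ~ reducible h w) -> xd_reduced_set g h.
Proof.
move=> irr i ug vg vh xl_ug dl_vg dl_vh w w_h; apply/negP => /andP[ug_w le_w].
by apply: (irr w); split=> //; exists i, ug, vg, vh.
Qed.

Lemma reduced_or_max_reducible h :
  xd_reduced_set g h \/
  exists t, reducible h t /\ forall w, reducible h w -> termle_x w t.
Proof.
case: (classic (exists2 w, w \in msupp h & reducible h w)) => [ex|none].
  have [t [_ ht tmax]] := exists_max_seq (@termle_x_refl n m) (@termle_x_trans n m)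
    (@termle_x_total n m) ex.
  by right; exists t; split=> // w hw; apply: tmax hw.1 hw.
by left; apply: reduced_of_irreducible => w hw; apply: none; exists w => //; case: hw.
Qed.

Lemma reduction_step h t :
  remainder h -> reducible h t -> (forall w, reducible h w -> termle_x w t) ->
  exists h', remainder h' /\ forall w, reducible h' w -> termlt w t.
Proof.
move=> rem_h [t_h [i [ug [vg [vh [xl_ug dl_vg dl_vh ug_t le_t]]]]]] tmax.
have [R [act_g below_R]] := act_mon_xleader (mquot ug.1 t.1) xl_ug dl_vg.
rewrite mul_term_mquot // in act_g below_R.
have lc_g : (g i)@_ug != 0 by rewrite mcoeff_neq0; case: xl_ug.
have R_t : R@_t = 0.
  by apply: mcoeff_outdom; apply/negP => /below_R[]; rewrite /termlt eqxx andbF.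
exists (h - (h@_t / (g i)@_ug) *: act_mon (mquot ug.1 t.1) (g i)).
split; first exact: remainder_sub.
have supp_h' := msupp_cancel (h := h) lc_g R_t; rewrite -act_g in supp_h'.
have ordd_h' w :
    w \in msupp (h - (h@_t / (g i)@_ug) *: act_mon (mquot ug.1 t.1) (g i)) ->
    (ordd w.1 <= ordd vh.1)%N.
  case/supp_h' => [/below_R[_ le_w] | [_ /dl_vh.2/termle_d_ordd]] //.
  exact: leq_trans le_w le_t.
move=> w [w_h' [j [u [v [vh' [xl_u dl_v dl_vh' u_w le_w]]]]]].
case/supp_h': w_h' => [/below_R[] // | [ne_wt w_h]].
have: termle_x w t.
  apply: tmax; split=> //; exists j, u, v, vh; split=> //.
  exact: leq_trans le_w (ordd_h' _ dl_vh'.1).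
by rewrite /termlt ne_wt andbT.
Qed.

Lemma reduce_below_max t h :
  remainder h -> reducible h t -> (forall w, reducible h w -> termle_x w t) ->
  exists h', remainder h' /\ xd_reduced_set g h'.
Proof.
elim: (termlt_wf t) h => {}t _ IH h rem_h ht tmax.
have [h' [rem_h' lt_t]] := reduction_step rem_h ht tmax.
have [red_h'|[t' [ht' tmax']]] := reduced_or_max_reducible h'; first by exists h'.
exact: IH (lt_t _ ht') h' rem_h' ht' tmax'.
Qed.

Lemma exists_reduced_remainder : exists h, remainder h /\ xd_reduced_set g h.
Proof.
have [red_f|[t [ht tmax]]] := reduced_or_max_reducible f.
  by exists f; split; first exact: remainder_self.
exact: reduce_below_max remainder_self ht tmax.
Qed.

End Reduction.

Theorem theorem4p6 (K : fieldType) (hK : [pchar K] =i pred0)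
    (n m r : nat) (f : FreeMod K n m) (g : 'I_r -> FreeMod K n m) :
  is_xd_groebner g ->
  exists (h : FreeMod K n m) (Q : 'I_r -> Weyl K n),
    f - h = \sum_(i < r) act (Q i) (g i) /\ xd_reduced_set g h.
Proof.
move=> _.
have [h [[Q EQ] red_h]] := exists_reduced_remainder g f.
by exists h, Q.
Qed.
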